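(* Let $\mathcal{N}^+$ be a topological level-1 rooted network on $X$ with root $r$, and let $m=\mathrm{MRCA}(X)$. Then there is $k\ge 0$ and distinct nodes $r=r_1,h_1,r_2,h_2,\dots,r_k,h_k,r_{k+1}=m$ such that the nodes above $m$ are exactly $r_1,h_1,\dots,r_k,h_k$ and the edges above $m$ are exactly, for each $i=1,\dots,k$, two parallel edges from $r_i$ to $h_i$ (so $h_i$ is a hybrid node and the pair forms a $2$-cycle) together with one edge from $h_i$ to $r_{i+1}$. In particular, if $k=0$ then $m=r$.
   Context: Rooted network on $X$: connected directed acyclic graph without loops (at most two parallel edges between two nodes allowed) with a root $r$ (indegree 0, outdegree 2), leaves bijectively labeled by $X$ (indegree 1, outdegree 0), tree nodes (indegree 1, outdegree 2) and hybrid nodes (indegree 2, outdegree 1). A node $v$ is above $u$ if there is a nonempty directed path from $v$ to $u$; an edge with child $y$ is above a node $v$ if $y$ is above or equal to $v$. $\mathrm{MRCA}(X)$ is the lowest node among those lying on every directed path from $r$ to any leaf. A cycle is a cycle of the underlying undirected graph (a $2$-cycle being a pair of parallel edges); the network is level-1 if no two cycles share an edge. *)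

From mathcomp Require Import all_boot.
Set Implicit Arguments. Unset Strict Implicit. Unset Printing Implicit Defensive.

(* A directed multigraph: finite node type V, finite edge type E,
   each edge e goes from [src e] to [tgt e] (parallel edges allowed). *)
Section Network.
Variables (X V E : finType) (src tgt : E -> V).

Definition indeg (v : V) : nat := #|[set e | tgt e == v]|.
Definition outdeg (v : V) : nat := #|[set e | src e == v]|.

Fixpoint dwalk (v : V) (p : seq E) (u : V) : bool :=
  if p is e :: p' then (src e == v) && dwalk (tgt e) p' u else v == u.

Definition joins (e : E) (a b : V) : bool :=
  ((src e == a) && (tgt e == b)) || ((src e == b) && (tgt e == a)).

Fixpoint uwalk (v : V) (p : seq E) (u : V) : bool :=
  if p is e :: p' then
    ((src e == v) && uwalk (tgt e) p' u) || ((tgt e == v) && uwalk (src e) p' u)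
  else v == u.

Definition above (v u : V) : Prop := exists p, p != [::] /\ dwalk v p u.

Definition edge_above (e : E) (v : V) : Prop := tgt e = v \/ above (tgt e) v.

Definition is_leaf (v : V) : Prop := indeg v = 1 /\ outdeg v = 0.
Definition is_tree_node (v : V) : Prop := indeg v = 1 /\ outdeg v = 2.
Definition is_hybrid (v : V) : Prop := indeg v = 2 /\ outdeg v = 1.

Definition rooted_network (r : V) (lab : X -> V) : Prop :=
  [/\ (forall a b : V, exists p, uwalk a p b),
      (forall v p, p != [::] -> ~~ dwalk v p v),
      (forall e, src e != tgt e),
      (forall a b : V, #|[set e | (src e == a) && (tgt e == b)]| <= 2)
    & [/\
      (indeg r = 0 /\ outdeg r = 2),
      (forall v, v != r -> [\/ is_leaf v, is_tree_node v | is_hybrid v])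
    & (injective lab /\ forall v, is_leaf v <-> exists x, lab x = v)]].

(* A cycle of the underlying undirected multigraph, given as a nonempty
   cyclic list of (edge e_i, node v_i) where e_i joins v_i and v_{i+1}
   (indices mod length); edges pairwise distinct and nodes pairwise distinct.
   A 2-cycle is a pair of parallel edges. *)
Definition cyc_rel (a b : E * V) : bool := joins a.1 a.2 b.2.
Definition is_cycle (s : seq (E * V)) : bool :=
  [&& s != [::], uniq (map fst s), uniq (map snd s) & cycle cyc_rel s].

Definition level1 : Prop :=
  forall s1 s2, is_cycle s1 -> is_cycle s2 ->
    has (mem (map fst s2)) (map fst s1) -> map fst s1 =i map fst s2.

Definition on_all_root_leaf_paths (r : V) (lab : X -> V) (w : V) : Prop :=
  forall x p, dwalk r p (lab x) -> w \in r :: map tgt p.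

Definition is_MRCA (r : V) (lab : X -> V) (m : V) : Prop :=
  on_all_root_leaf_paths r lab m /\
  forall w, on_all_root_leaf_paths r lab w -> w = m \/ above w m.

End Network.

From mathcomp Require Import all_boot.
From Stdlib Require Import ClassicalEpsilon.
Set Implicit Arguments. Unset Strict Implicit. Unset Printing Implicit Defensive.

(* Walk down from the root through nodes lying on every root-leaf path.  Such a node
   [u] strictly above [m] has indegree at most one, hence two out-edges, and its two
   children coincide: otherwise let [x] be their first common descendant; the child
   strictly above [x] is a tree node whose two out-edges start two cycles, one closing
   at [x] and one at the first meeting point of these out-edges, which share an edge,
   so level-1 forces them to be equal, which is impossible.  The common child is then
   a hybrid node whose unique child again lies on every root-leaf path and has
   indegree one, and the descent continues until it reaches [m]. *)

Section CardSet.
Variables (T : finType) (P : pred T).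

Lemma card_set0 x : #|[set y | P y]| = 0 -> ~~ P x.
Proof. by move/card0_eq/(_ x); rewrite inE => ->. Qed.

Lemma card_set_gt0 : 0 < #|[set y | P y]| -> exists x, P x.
Proof. by rewrite card_gt0 => /set0Pn [x]; rewrite inE; exists x. Qed.

Lemma card_set1P : #|[set y | P y]| = 1 -> exists x, P x /\ forall y, P y -> y = x.
Proof.
move/eqP/cards1P => [x Hx]; exists x; split; first by have := set11 x; rewrite -Hx inE.
by move=> y Py; apply/set1P; rewrite -Hx inE.
Qed.

Lemma card_set2P : #|[set y | P y]| = 2 ->
  exists x1 x2, [/\ x1 != x2, P x1, P x2 & forall y, P y -> y = x1 \/ y = x2].
Proof.
move/eqP/cards2P => [x1 [x2 [Hne Hx]]]; exists x1, x2; split=> //.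
- by have := setU11 x1 [set x2]; rewrite -Hx inE.
- by have := setU1r x1 (set11 x2); rewrite -Hx inE.
- by move=> y Py; apply/set2P; rewrite -Hx inE.
Qed.

End CardSet.

Section StrictInduction.
Variables (T : finType) (R : T -> T -> Prop).
Hypotheses (R_trans : forall a b c, R a b -> R b c -> R a c) (R_irrefl : forall a, ~ R a a).

Let Rb (w v : T) : bool := if excluded_middle_informative (R w v) then true else false.

Let RbP w v : reflect (R w v) (Rb w v).
Proof. by rewrite /Rb; case: excluded_middle_informative => H; constructor. Qed.

Lemma strict_ind (P : T -> Prop) : (forall v, (forall w, R w v -> P w) -> P v) -> forall v, P v.
Proof.
move=> IH; suff S n v : #|[set w | Rb w v]| < n -> P v by move=> v; exact: S _ v (ltnSn _).
elim: n v => [//|n IHn] v /[!ltnS] Hv; apply: IH => w Hwv; apply: IHn; apply: leq_trans Hv.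
apply: proper_card; apply/properP; split.
  by apply/subsetP => z /[!inE] /RbP Hzw; apply/RbP; apply: R_trans Hzw Hwv.
by exists w; rewrite !inE; apply/RbP => //; apply: R_irrefl.
Qed.

End StrictInduction.

Section Walks.
Variables (V E : finType) (src tgt : E -> V).
Local Notation dwalk := (dwalk src tgt).
Local Notation above := (above src tgt).

Definition reach (v u : V) : Prop := v = u \/ above v u.

Lemma dwalk_cat v p u q w : dwalk v p u -> dwalk u q w -> dwalk v (p ++ q) w.
Proof.
elim: p v => [|e p IH] v /=; first by move=> /eqP ->.
by case/andP=> -> Hp Hq; rewrite (IH _ Hp Hq).
Qed.

Lemma above_trans a b c : above a b -> above b c -> above a c.
Proof.
move=> [p [Hp Hab]] [q [_ Hbc]]; exists (p ++ q); split; last exact: dwalk_cat Hab Hbc.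
by case: p Hp {Hab}.
Qed.

Lemma reach_above a b c : reach a b -> above b c -> above a c.
Proof. by case=> [->//|Hab] Hbc; apply: above_trans Hab Hbc. Qed.

Lemma above_reach a b c : above a b -> reach b c -> above a c.
Proof. by move=> Hab [<-//|Hbc]; apply: above_trans Hab Hbc. Qed.

Lemma above_src e u : reach (tgt e) u -> above (src e) u.
Proof.
case=> [<-|[p [_ Hp]]]; first by exists [:: e]; rewrite /= !eqxx.
by exists (e :: p); rewrite /= eqxx Hp.
Qed.

Lemma src_above_tgt e : above (src e) (tgt e).
Proof. by apply: above_src; left. Qed.

Lemma above_first v u : above v u -> exists2 e, src e = v & reach (tgt e) u.
Proof.
case=> [[|e p]] [//= _] /andP [/eqP He Hp]; exists e => //.
by case: p Hp => [/eqP ->|g p Hp]; [left | right; exists (g :: p)].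
Qed.

Lemma reach_via u h v : (forall e, src e = u -> tgt e = h) -> reach u v ->
  v = u \/ reach h v.
Proof. by move=> Hh [->|/above_first [e /Hh <-]]; [left | right]. Qed.

Lemma walk_reach v p u : dwalk v p u -> reach v u.
Proof. by case: p => [/eqP ->|e p Hp]; [left | right; exists (e :: p)]. Qed.

Lemma reach_walk v u : reach v u -> exists p, dwalk v p u.
Proof. by case=> [->|[p [_ Hp]]]; [exists [::]; rewrite /= eqxx | exists p]. Qed.

Lemma walk_mem v p u y : dwalk v p u -> y \in v :: map tgt p -> reach v y /\ reach y u.
Proof.
elim: p v => [|e p IH] v /=; first by move=> /eqP -> /[!inE] /eqP ->; split; left.
case/andP=> /eqP He Hp /[!inE] /orP [/eqP ->|Hy].
  by split; [left | right; rewrite -He; apply/above_src/(walk_reach Hp)].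
by have [Hey Hyu] := IH _ Hp Hy; split=> //; right; rewrite -He; apply: above_src.
Qed.

Lemma walk_pos v p u y : dwalk v p u -> y \in v :: map tgt p ->
  y = u \/ exists2 g, g \in p & src g = y.
Proof.
elim: p v => [|e p IH] v /=; first by move=> /eqP -> /[!inE] /eqP ->; left.
case/andP=> /eqP He Hp /[!inE] /orP [/eqP ->|Hy]; first by right; exists e; rewrite ?mem_head.
by have [->|[g Hg Hgy]] := IH _ Hp Hy; [left | right; exists g; rewrite // inE Hg orbT].
Qed.

Lemma src_mem v p u g : dwalk v p u -> g \in p -> src g \in v :: map tgt p.
Proof.
elim: p v => [|e p IH] v //= /andP [/eqP He Hp]; rewrite inE => /orP [/eqP ->|Hg].
  by rewrite He mem_head.
by rewrite inE (IH _ Hp Hg) orbT.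
Qed.

Lemma edge_in_walk v p u g : dwalk v p u -> g \in p -> reach v (src g) /\ reach (tgt g) u.
Proof.
move=> Hp Hg; split; first exact: (walk_mem Hp (src_mem Hp Hg)).1.
by apply: (walk_mem Hp _).2; rewrite inE map_f ?orbT.
Qed.

Hypothesis acyclic : forall v p, p != [::] -> ~~ dwalk v p v.

Lemma above_irrefl v : ~ above v v.
Proof. by move=> [p [Hp Hw]]; move: (acyclic v Hp); rewrite Hw. Qed.

Lemma uniq_src v p u : dwalk v p u -> uniq (map src p).
Proof.
elim: p v => [|e p IH] v //= /andP [/eqP He Hp]; rewrite (IH _ Hp) andbT.
apply/mapP => [[g Hg Hs]]; have [Hvg _] := edge_in_walk Hp Hg.
by apply: (@above_irrefl (src e)); rewrite {2}Hs; apply: above_src.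
Qed.

Lemma uniq_tgt v p u : dwalk v p u -> uniq (map tgt p).
Proof.
elim: p v => [|e p IH] v //= /andP [/eqP He Hp]; rewrite (IH _ Hp) andbT.
apply/mapP => [[g Hg Hs]]; have [Hvg _] := edge_in_walk Hp Hg.
by apply: (@above_irrefl (tgt e)); rewrite {2}Hs; apply: reach_above Hvg (src_above_tgt g).
Qed.

Lemma above_ind (P : V -> Prop) :
  (forall v, (forall w, above w v -> P w) -> P v) -> forall v, P v.
Proof. exact: (strict_ind (R := above) above_trans above_irrefl). Qed.

Lemma below_ind (P : V -> Prop) :
  (forall v, (forall w, above v w -> P w) -> P v) -> forall v, P v.
Proof.
apply: (strict_ind (R := fun w v => above v w)) => [a b c Hba Hcb|]; last exact: above_irrefl.
exact: above_trans Hcb Hba.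
Qed.

Lemma exists_highest (P : V -> Prop) v : P v -> exists x, P x /\ forall y, P y -> ~ above y x.
Proof.
elim/above_ind: v => v IH Pv.
case: (excluded_middle_informative (exists2 y, P y & above y v)) => [[y Py Hyv]|N].
  exact: IH Hyv Py.
by exists v; split=> // y Py Hyv; apply: N; exists y.
Qed.

Local Notation joins := (joins src tgt).
Local Notation cyc_rel := (cyc_rel src tgt).

(* A walk [p] listed as a cycle in its own direction pairs every edge with its
   source; a walk [q] traversed backwards pairs every edge with its target. *)
Definition cyc_fwd (p : seq E) := [seq (e, src e) | e <- p].
Definition cyc_bwd (q : seq E) := [seq (e, tgt e) | e <- rev q].

Lemma cycle_edges p q : map fst (cyc_fwd p ++ cyc_bwd q) = p ++ rev q.
Proof. by rewrite map_cat /cyc_fwd /cyc_bwd -!map_comp !map_id. Qed.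

Lemma cycle_nodes p q : map snd (cyc_fwd p ++ cyc_bwd q) = map src p ++ rev (map tgt q).
Proof. by rewrite map_cat /cyc_fwd /cyc_bwd -!map_comp map_rev. Qed.

Lemma cyc_fwd_path v p u x0 : dwalk v p u -> joins x0.1 x0.2 v ->
  path cyc_rel x0 (cyc_fwd p) /\ joins (last x0 (cyc_fwd p)).1 (last x0 (cyc_fwd p)).2 u.
Proof.
elim: p v x0 => [|e p IH] v x0 /=; first by move=> /eqP ->.
case/andP=> /eqP He Hp Hj; rewrite /cyc_rel /= He Hj /=.
by apply: IH Hp _; rewrite /joins /= He !eqxx.
Qed.

Lemma cyc_bwd_path v q u x0 : dwalk v q u -> joins x0.1 x0.2 u ->
  path cyc_rel x0 (cyc_bwd q) /\ joins (last x0 (cyc_bwd q)).1 (last x0 (cyc_bwd q)).2 v.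
Proof.
elim: q v x0 => [|e q IH] v x0 /=; first by move=> /eqP ->.
case/andP=> /eqP He Hq Hj; rewrite /cyc_bwd rev_cons map_rcons rcons_path last_rcons.
have [Hpath Hlast] := IH _ _ Hq Hj; rewrite -/(cyc_bwd q) Hpath; split=> //.
by rewrite /joins /= He !eqxx orbT.
Qed.

Lemma two_walks_cyc_rel s e w q x : dwalk s (e :: w) x -> dwalk s q x ->
  cycle cyc_rel (cyc_fwd (e :: w) ++ cyc_bwd q).
Proof.
move=> /= /andP [/eqP He Hw] Hq; rewrite rcons_path cat_path last_cat.
have J0 : joins (e, src e).1 (e, src e).2 (tgt e) by rewrite /joins /= !eqxx.
have [Pw Jw] := cyc_fwd_path Hw J0; have [Pq Jq] := cyc_bwd_path Hq Jw.
by rewrite Pw Pq /cyc_rel /=; move: Jq; rewrite He.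
Qed.

Definition first_meet (a b x : V) : Prop :=
  [/\ reach a x, reach b x & forall y, reach a y -> reach b y -> ~ above y x].

Lemma exists_first_meet a b z : reach a z -> reach b z -> exists x, first_meet a b x.
Proof.
move=> Haz Hbz.
have [x [[Hax Hbx] Hx]] := exists_highest (P := fun y => reach a y /\ reach b y) (conj Haz Hbz).
by exists x; split=> // y Hay Hby; apply: Hx.
Qed.

Lemma first_meet_sym a b x : first_meet a b x -> first_meet b a x.
Proof. by case=> Hax Hbx Hx; split=> // y Hby Hay; apply: Hx. Qed.

Lemma walks_meet_only_at a b x p q : first_meet a b x -> dwalk a p x -> dwalk b q x ->
  forall y, y \in a :: map tgt p -> y \in b :: map tgt q -> y = x.
Proof.
move=> [_ _ Hx] Hp Hq y Hyp Hyq; have [Hay Hyx] := walk_mem Hp Hyp.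
have [Hby _] := walk_mem Hq Hyq.
by case: Hyx => // Hyx; case: (Hx y Hay Hby Hyx).
Qed.

Lemma first_meet_cycle e e' x w w' : e != e' -> src e = src e' ->
  first_meet (tgt e) (tgt e') x -> dwalk (tgt e) w x -> dwalk (tgt e') w' x ->
  is_cycle src tgt (cyc_fwd (e :: w) ++ cyc_bwd (e' :: w')).
Proof.
move=> Hne Hs Hx Hw Hw'; set s := src e.
have HP : dwalk s (e :: w) x by rewrite /= eqxx.
have HQ : dwalk s (e' :: w') x by rewrite /= -Hs eqxx.
have Hmeet := walks_meet_only_at Hx Hw Hw'.
have Hsrc (g : E) d p : dwalk (tgt d) p x -> g \in d :: p -> g = d \/ src g \in map tgt (d :: p).
  by move=> Hp /[!inE] /orP [/eqP ->|Hg]; [left | right; apply: src_mem Hp Hg].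
have Hbelow p : dwalk s p x -> forall y, y \in map tgt p -> above s y.
  by move=> Hp y /mapP [g Hg ->]; apply: reach_above (edge_in_walk Hp Hg).1 (src_above_tgt g).
have Habove_x g : g \in e :: w -> above (src g) x.
  by move=> Hg; apply: above_src; exact: (edge_in_walk HP Hg).2.
have Hs_out p y : dwalk s p x -> y \in map tgt p -> y <> s.
  by move=> Hp Hy Eys; apply: (@above_irrefl s); rewrite -{2}Eys; apply: Hbelow Hp _ Hy.
rewrite /is_cycle cycle_edges cycle_nodes (two_walks_cyc_rel HP HQ) andbT !cat_uniq !rev_uniq.
rewrite (map_uniq (uniq_src HP)) (map_uniq (uniq_src HQ)) (uniq_src HP) (uniq_tgt HQ).
apply/and4P; split=> //.
- rewrite andbT; apply/negP => /hasP [g]; rewrite mem_rev => Hg' Hg.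
  case: (Hsrc g e w Hw Hg) => [Ege|Hge]; case: (Hsrc g e' w' Hw' Hg') => [Ege'|Hge'].
  + by move: Hne; rewrite -Ege Ege' eqxx.
  + by apply: Hs_out HQ Hge' _; rewrite Ege.
  + by apply: Hs_out HP Hge _; rewrite Ege' -Hs.
  + by apply: (@above_irrefl x); rewrite -{1}(Hmeet _ Hge Hge'); apply: Habove_x.
- rewrite ?andbT; apply/negP => /hasP [y]; rewrite mem_rev => Hy' /mapP [g Hg Eyg].
  case: (Hsrc g e w Hw Hg) => [Ege|Hge].
    by apply: Hs_out HQ Hy' _; rewrite Eyg Ege.
  have Eyx : y = x by apply: Hmeet; rewrite // Eyg.
  by apply: (@above_irrefl x); rewrite -{1}Eyx Eyg; apply: Habove_x.
Qed.

Lemma card_out_to u h : (forall e, src e = u -> tgt e = h) ->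
  #|[set e | (src e == u) && (tgt e == h)]| = outdeg src u.
Proof. by move=> Hh; apply: eq_card => e; rewrite !inE; case: eqP => //= /Hh ->; rewrite eqxx. Qed.

Variable m : V.

Definition scons (x : V) (f : nat -> V) (i : nat) : V := if i is j.+1 then f j else x.

(* Between [u] and [m] the network consists of the 2-cycles from [rr i] to [hh i]
   and the edges [hh i -> rr i.+1], for [i < k]. *)
Definition chain (u : V) (k : nat) (rr hh : nat -> V) : Prop :=
  [/\ rr 0 = u, rr k = m,
    uniq ([seq rr i | i <- iota 0 k.+1] ++ [seq hh i | i <- iota 0 k])
  & [/\ (forall v, reach u v /\ above v m <-> exists2 i, i < k & (v = rr i \/ v = hh i)),
    (forall e, reach u (src e) /\ reach (tgt e) m <-> exists2 i, i < k &
        ((src e = rr i /\ tgt e = hh i) \/ (src e = hh i /\ tgt e = rr i.+1)))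
  & (forall i, i < k -> #|[set e | (src e == rr i) && (tgt e == hh i)]| = 2 /\
         #|[set e | (src e == hh i) && (tgt e == rr i.+1)]| = 1)]].

Lemma map_scons_iota x f n :
  [seq scons x f i | i <- iota 0 n.+1] = x :: [seq f i | i <- iota 0 n].
Proof. by congr (_ :: _); elim: n 0 => //= n IH s; rewrite IH. Qed.

Lemma exists_ltS (P : nat -> Prop) k :
  (exists2 i, i < k.+1 & P i) <-> P 0 \/ exists2 i, i < k & P i.+1.
Proof.
split=> [[[|i] Hi Pi]|[P0|[i Hi Pi]]];
  [by left | by right; exists i | by exists 0 | by exists i.+1].
Qed.

Lemma chain_nil : chain m 0 (fun=> m) (fun=> m).
Proof.
split=> //; split=> // [v|e]; split=> [[Hmv Hvm]|[]//]; case: (@above_irrefl m).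
  exact: reach_above Hmv Hvm.
exact: reach_above Hmv (above_src Hvm).
Qed.

Lemma chain_reach_end u k rr hh : chain u k rr hh -> reach u m.
Proof.
case: k => [|k] [R0 Rk _ [HN _ _]]; first by left; rewrite -R0 Rk.
by right; have [] := (HN u).2 (ex_intro2 _ _ 0 (ltn0Sn k) (or_introl (esym R0))).
Qed.

Lemma chain_mem_reach u k rr hh v : chain u k rr hh ->
  v \in [seq rr i | i <- iota 0 k.+1] ++ [seq hh i | i <- iota 0 k] -> reach u v.
Proof.
move=> Hc; have Hum := chain_reach_end Hc; case: Hc => _ Rk _ [HN _ _].
rewrite mem_cat => /orP [/mapP [i]|/mapP [i]]; rewrite mem_iota leq0n add0n => Hi ->.
  move: Hi; rewrite ltnS leq_eqVlt => /orP [/eqP ->|Hi]; first by rewrite Rk.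
  by have [] := (HN (rr i)).2 (ex_intro2 _ _ i Hi (or_introl erefl)).
by have [] := (HN (hh i)).2 (ex_intro2 _ _ i Hi (or_intror erefl)).
Qed.

Lemma above_out_target v w : (forall e, src e = v -> tgt e = w) -> 0 < outdeg src v ->
  above v w.
Proof. by move=> Hw /card_set_gt0 [e /eqP He]; rewrite -He -(Hw e He); apply: src_above_tgt. Qed.

Section ChainCons.
Variables (u h u' : V).
Hypotheses (Hu_h : forall e, src e = u -> tgt e = h)
           (Hh_u' : forall e, src e = h -> tgt e = u').
Hypotheses (Hu_out : outdeg src u = 2) (Hh_out : outdeg src h = 1).

Let above_u_h : above u h. Proof. by apply: above_out_target; rewrite ?Hu_out. Qed.
Let above_h_u' : above h u'. Proof. by apply: above_out_target; rewrite ?Hh_out. Qed.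

Lemma chain_cons k rr hh : chain u' k rr hh -> chain u k.+1 (scons u rr) (scons h hh).
Proof.
move=> Hc; have Hu'm := chain_reach_end Hc; have Hmem := chain_mem_reach Hc.
have above_u_u' := above_trans above_u_h above_h_u'.
case: Hc => R0 Rk Huniq [HN HE HC]; split=> //.
- set R := [seq rr i | i <- iota 0 k.+1] in Huniq Hmem *.
  set H := [seq hh i | i <- iota 0 k] in Huniq Hmem *.
  have Hperm : perm_eq ((u :: R) ++ h :: H) (u :: h :: R ++ H).
    by rewrite cat_cons perm_cons (perm_catCA R [:: h] H).
  rewrite !map_scons_iota -/R -/H (perm_uniq Hperm) (cons_uniq u) (cons_uniq h) in_cons.
  rewrite Huniq negb_or !andbT.
  have Hfresh v : above v u' -> v \notin R ++ H.
    by move=> Hvu'; apply/negP => /Hmem /(above_reach Hvu') /above_irrefl.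
  rewrite (Hfresh u above_u_u') (Hfresh h above_h_u') !andbT.
  by apply/eqP => Euh; apply: (@above_irrefl u); rewrite {2}Euh.
split.
- move=> v; rewrite exists_ltS /= -HN.
  split=> [[Huv Hvm]|[[->|->]|[Hu'v Hvm]]].
  + case: (reach_via Hu_h Huv) => [->|Hhv]; first by left; left.
    by case: (reach_via Hh_u' Hhv) => [->|Hu'v]; [left; right | right].
  + by split; [left | apply: above_reach above_u_u' Hu'm].
  + by split; [right | apply: above_reach above_h_u' Hu'm].
  + by split=> //; right; apply: above_reach above_u_u' Hu'v.
- move=> e; rewrite exists_ltS /= R0 -HE.
  split=> [[Hus Htm]|[[[Es Et]|[Es Et]]|[Hu's Htm]]].
  + case: (reach_via Hu_h Hus) => [Es|Hhs]; first by left; left; split=> //; apply: Hu_h.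
    case: (reach_via Hh_u' Hhs) => [Es|Hu's]; last by right.
    by left; right; split=> //; apply: Hh_u'.
  + by split; [left | rewrite Et; right; apply: above_reach above_h_u' Hu'm].
  + by split; [right; rewrite Es | rewrite Et].
  + by split=> //; right; apply: above_reach above_u_u' Hu's.
- case=> [|i] Hi; last exact: HC.
  by rewrite /= R0 !card_out_to.
Qed.

End ChainCons.

End Walks.

Arguments src_above_tgt {V E src tgt} e.

Section Network.
Variables (X V E : finType) (src tgt : E -> V) (r : V) (lab : X -> V) (m : V).
Local Notation dwalk := (dwalk src tgt).
Local Notation above := (above src tgt).
Local Notation reach := (reach src tgt).
Local Notation indeg := (indeg tgt).
Local Notation outdeg := (outdeg src).
Local Notation dom := (on_all_root_leaf_paths src tgt r lab).

Hypothesis acyclic : forall v p, p != [::] -> ~~ dwalk v p v.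
Hypotheses (root_in : indeg r = 0) (root_out : outdeg r = 2).
Hypothesis node_kinds : forall v, v != r ->
  [\/ is_leaf src tgt v, is_tree_node src tgt v | is_hybrid src tgt v].
Hypothesis leafP : forall v, is_leaf src tgt v <-> exists x, lab x = v.
Hypothesis level1_net : level1 src tgt.
Hypothesis mrca : is_MRCA src tgt r lab m.

Local Notation above_irrefl := (above_irrefl acyclic).

Lemma tgt_neq_root e : tgt e != r.
Proof. by apply/negP => /eqP Er; move: (card_set0 e root_in); rewrite Er eqxx. Qed.

Lemma leaf_no_out x e : src e != lab x.
Proof. by have [_ /(card_set0 e)] := (leafP (lab x)).2 (ex_intro _ x erefl). Qed.

Lemma root_walk v : exists p, dwalk r p v.
Proof.
elim/(above_ind acyclic): v => v IH.
case: (eqVneq v r) => [->|Hvr]; first by exists [::]; rewrite /= eqxx.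
have : 0 < indeg v by case: (node_kinds Hvr) => -[->].
case/card_set_gt0 => e /eqP He; have [p Hp] := IH (src e) (above_src (or_introl He)).
by exists (p ++ [:: e]); apply: dwalk_cat Hp _; rewrite /= He !eqxx.
Qed.

Lemma leaf_walk v : exists x p, dwalk v p (lab x).
Proof.
elim/(below_ind acyclic): v => v IH.
case: (posnP (outdeg v)) => [Hv|/card_set_gt0 [e /eqP He]].
  have Hvr : v != r by apply: contra_eq_neq Hv => ->; rewrite root_out.
  case: (node_kinds Hvr) => [/leafP [x <-]|[_ Hout]|[_ Hout]];
    [by exists x, [::]; rewrite /= eqxx | by rewrite Hout in Hv ..].
have Hve : above v (tgt e) by rewrite -He; apply: src_above_tgt.
have [x [p Hp]] := IH (tgt e) Hve.
by exists x, (e :: p); rewrite /= He eqxx.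
Qed.

(* Every root-to-leaf walk can be routed through any given edge. *)
Lemma dom_edge u g : dom u -> reach u (src g) \/ reach (tgt g) u.
Proof.
move=> Hu; have [p Hp] := root_walk (src g); have [x [q Hq]] := leaf_walk (tgt g).
have Hw : dwalk r (p ++ g :: q) (lab x) by apply: dwalk_cat Hp _; rewrite /= !eqxx.
move: (Hu x _ Hw); rewrite map_cat -cat_cons mem_cat => /orP [H|H].
  by left; exact: (walk_mem Hp H).2.
by right; exact: (walk_mem Hq H).1.
Qed.

Lemma dom_above_parent u g : dom u -> above u (tgt g) -> reach u (src g).
Proof. by move=> Hu Hug; case: (dom_edge g Hu) => // /(above_reach Hug) /above_irrefl. Qed.

Lemma dom_child_reach w e : dom w -> above (src e) w -> reach (tgt e) w.
Proof. by move=> Hw Hew; case: (dom_edge e Hw) => // /reach_above /(_ Hew) /above_irrefl. Qed.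

Lemma dom_next u h : dom u -> (exists e, src e = u) -> (forall e, src e = u -> tgt e = h) ->
  dom h.
Proof.
move=> Hu [e0 He0] Hh x p Hp; case: (walk_pos Hp (Hu x p Hp)) => [Eu|[g Hg Hgu]].
  by move: (leaf_no_out x e0); rewrite He0 Eu eqxx.
by rewrite inE -(Hh g Hgu) map_f ?orbT.
Qed.

Lemma dom_reach_mrca w : dom w -> reach w m.
Proof. by move=> Hw; case: (proj2 mrca w Hw) => [->|Hwm]; [left | right]. Qed.

Lemma outdeg2_of_indeg_le1 v : indeg v <= 1 -> (exists e, src e = v) -> outdeg v = 2.
Proof.
move=> Hin [e He]; case: (eqVneq v r) => [->//|Hvr].
case: (node_kinds Hvr) => [[_ H0]|[_ ->]//|[H2 _]]; last by rewrite H2 in Hin.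
by move: (card_set0 e H0); rewrite He eqxx.
Qed.

Lemma indeg_child u e : dom u -> src e = u ->
  (forall e', src e' = u -> e' != e -> ~ reach (tgt e') (tgt e)) -> indeg (tgt e) = 1.
Proof.
move=> Hu He Hsep; rewrite /indeg.
suff -> : [set g | tgt g == tgt e] = [set e] by rewrite cards1.
apply/setP => g; rewrite !inE.
apply/eqP/eqP => [Hg|->//]; case: (eqVneq g e) => // Hge.
have Hga : above (src g) (tgt e) by rewrite -Hg; apply: src_above_tgt.
have : reach u (src g) by apply: dom_above_parent Hu _; rewrite Hg -He; apply: src_above_tgt.
case=> [Eu|/above_first [e' He' Hr]].
  by case: (Hsep g (esym Eu) Hge); rewrite Hg; left.
case: (eqVneq e' e) => [Ee|Hne].
  by subst e'; case: (above_irrefl (reach_above Hr Hga)).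
by case: (Hsep e' He' Hne); right; apply: reach_above Hr Hga.
Qed.

Lemma sibling_on_cycle s f z (C : seq (E * V)) :
  is_cycle src tgt C -> s \in map fst C -> f != s -> src f = src s ->
  reach (tgt f) z -> reach (tgt s) z -> f \in map fst C.
Proof.
move=> HC Hs Hfs Hsrc Hfz Hsz; have [x Hx] := exists_first_meet acyclic Hfz Hsz.
have [[p Hp] [q Hq]] : (exists p, dwalk (tgt f) p x) /\ (exists q, dwalk (tgt s) q x).
  by case: Hx => /reach_walk Hfx /reach_walk Hsx _.
have HC' := first_meet_cycle acyclic Hfs Hsrc Hx Hp Hq.
have Hshare :
    has (mem (map fst C)) (map fst (cyc_fwd src (f :: p) ++ cyc_bwd tgt (s :: q))).
  by apply/hasP; exists s; rewrite // cycle_edges mem_cat mem_rev mem_head orbT.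
by rewrite -(level1_net HC' HC Hshare) cycle_edges mem_head.
Qed.

Lemma first_child_meets u e1 e2 x : dom u -> above u m -> e1 != e2 ->
  src e1 = u -> src e2 = u -> (forall e, src e = u -> e = e1 \/ e = e2) ->
  first_meet src tgt (tgt e1) (tgt e2) x -> tgt e1 = x.
Proof.
move=> Hu Hum H12 H1 H2 Hout Hx; case: (Hx) => -[//|Hax] /reach_walk [P2 HP2] Hmax.
have Hm := proj1 mrca.
have Hua : above u (tgt e1) by rewrite -H1; apply: src_above_tgt.
have Hba : ~ reach (tgt e2) (tgt e1) by move=> Hba; exact: Hmax _ (or_introl erefl) Hba Hax.
have Ham : above (tgt e1) m.
  have [Eam|//] : reach (tgt e1) m by apply: dom_child_reach Hm _; rewrite H1.
  by case: Hba; rewrite Eam; apply: dom_child_reach Hm _; rewrite H2.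
have [[|s1 P1] [//= _ /andP [/eqP Hs1 HP1]]] := Hax.
have Hout_a : outdeg (tgt e1) = 2.
  apply: outdeg2_of_indeg_le1; last by exists s1.
  rewrite (indeg_child Hu H1) // => e' He' Hne'.
  by case: (Hout e' He') => Ee; [rewrite Ee eqxx in Hne' | rewrite Ee].
have [f [Hfs Hf]] : exists f, f != s1 /\ src f = tgt e1.
  have [f1 [f2 [Hf12 /eqP Hf1 /eqP Hf2 Hf]]] := card_set2P Hout_a.
  by case: (Hf s1 (introT eqP Hs1)) => ->; [exists f2 | exists f1]; split=> //; rewrite eq_sym.
have HP : dwalk (tgt e1) (s1 :: P1) x by rewrite /= Hs1 eqxx.
have HC := first_meet_cycle acyclic H12 (etrans H1 (esym H2)) Hx HP HP2.
have Hs1C : s1 \in map fst (cyc_fwd src (e1 :: s1 :: P1) ++ cyc_bwd tgt (e2 :: P2)).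
  by rewrite cycle_edges mem_cat in_cons mem_head orbT.
have Hreach_m e : src e = tgt e1 -> reach (tgt e) m.
  by move=> He; apply: dom_child_reach Hm _; rewrite He.
have := sibling_on_cycle HC Hs1C Hfs (etrans Hf (esym Hs1)) (Hreach_m f Hf) (Hreach_m s1 Hs1).
have Hfu : src f <> u by rewrite Hf => Eu; move: Hua; rewrite Eu; apply: above_irrefl.
rewrite cycle_edges mem_cat mem_rev !in_cons => /orP [/orP [/eqP Ef|/orP [/eqP Ef|Hf1]]|].
- by case: Hfu; rewrite Ef.
- by rewrite Ef eqxx in Hfs.
- have [Hr _] := edge_in_walk HP1 Hf1; rewrite Hf in Hr.
  by move: (above_reach (src_above_tgt s1) Hr); rewrite Hs1 => /above_irrefl.
move=> /orP [/eqP Ef|Hf2]; first by case: Hfu; rewrite Ef.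
by case: Hba; rewrite -Hf; exact: (edge_in_walk HP2 Hf2).1.
Qed.

Lemma children_merge u : dom u -> above u m -> outdeg u = 2 ->
  exists h, forall e, src e = u -> tgt e = h.
Proof.
move=> Hu Hum /card_set2P [e1 [e2 [H12 /eqP H1 /eqP H2 Hout]]].
have {}Hout e : src e = u -> e = e1 \/ e = e2 by move/eqP/Hout.
have Hm e : src e = u -> reach (tgt e) m.
  by move=> He; apply: dom_child_reach (proj1 mrca) _; rewrite He.
have [x Hx] := exists_first_meet acyclic (Hm e1 H1) (Hm e2 H2).
have E1 := first_child_meets Hu Hum H12 H1 H2 Hout Hx.
have E2 : tgt e2 = x.
  apply: first_child_meets Hu Hum _ H2 H1 _ (first_meet_sym Hx); first by rewrite eq_sym.
  by move=> e /Hout [->|->]; [right | left].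
by exists x => e /Hout [->|->].
Qed.

Lemma dom_step u : dom u -> above u m -> indeg u <= 1 ->
  exists h u', [/\ (forall e, src e = u -> tgt e = h), outdeg u = 2,
     (forall e, src e = h -> tgt e = u'), outdeg h = 1
   & [/\ dom u', reach u' m & indeg u' <= 1]].
Proof.
move=> Hu Hum Hin; have [e1 He1 _] := above_first Hum.
have Hu_out := outdeg2_of_indeg_le1 Hin (ex_intro _ e1 He1).
have [h Hu_h] := children_merge Hu Hum Hu_out.
have Hh_in : 1 < indeg h.
  have [e1' [e2' [H12 /eqP H1 /eqP H2 _]]] := card_set2P Hu_out.
  apply: leq_trans (_ : #|[set e1'; e2']| <= _); first by rewrite cards2 H12.
  by apply/subset_leq_card/subsetP => e /[!inE] /orP [/eqP ->|/eqP ->]; rewrite Hu_h ?eqxx.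
have Hh_out : outdeg h = 1.
  have Hhr : h != r by rewrite -(Hu_h e1 He1) tgt_neq_root.
  by case: (node_kinds Hhr) => [[H _]|[H _]|[_ //]]; rewrite H in Hh_in.
have [g [/eqP Hg Hg_uniq]] := card_set1P Hh_out.
have Hh_u' e : src e = h -> tgt e = tgt g by move=> /eqP /Hg_uniq ->.
have Hdh : dom h by apply: dom_next Hu _ Hu_h; exists e1.
have Hdu' : dom (tgt g) by apply: dom_next Hdh _ Hh_u'; exists g.
exists h, (tgt g); split=> //; split; [by [] | exact: dom_reach_mrca |].
by rewrite (indeg_child Hdh Hg) // => e' /eqP /Hg_uniq ->; rewrite eqxx.
Qed.

Lemma dom_chain u : dom u -> reach u m -> indeg u <= 1 ->
  exists k rr hh, chain src tgt m u k rr hh.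
Proof.
elim/(below_ind acyclic): u => u IH Hu [Eum|Hum] Hin.
  by rewrite Eum; exists 0, (fun=> m), (fun=> m); exact: chain_nil.
have [h [u' [Hu_h Hu_out Hh_u' Hh_out [Hdu' Hu'm Hin']]]] := dom_step Hu Hum Hin.
have Hu_u' : above u u'.
  apply: above_trans (above_out_target Hu_h _) (above_out_target Hh_u' _).
    by rewrite Hu_out.
  by rewrite Hh_out.
have [k [rr [hh Hc]]] := IH u' Hu_u' Hdu' Hu'm Hin'.
by exists k.+1, (scons u rr), (scons h hh); apply: chain_cons Hc.
Qed.

End Network.

Theorem mainTheorem6 (X V E : finType) (src tgt : E -> V) (r : V)
    (lab : X -> V) (m : V) :
  rooted_network src tgt r lab ->
  level1 src tgt ->
  is_MRCA src tgt r lab m ->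
  exists (k : nat) (rr hh : nat -> V),
    [/\ rr 0 = r, rr k = m,
        uniq ([seq rr i | i <- iota 0 k.+1] ++ [seq hh i | i <- iota 0 k])
      & [/\         (forall v, above src tgt v m <-> exists2 i, i < k & (v = rr i \/ v = hh i)),
        (forall e, edge_above src tgt e m <->
             exists2 i, i < k &
               ((src e = rr i /\ tgt e = hh i) \/ (src e = hh i /\ tgt e = rr i.+1)))
      & (forall i, i < k ->
           #|[set e | (src e == rr i) && (tgt e == hh i)]| = 2 /\
           #|[set e | (src e == hh i) && (tgt e == rr i.+1)]| = 1)]].
Proof.
move=> [_ acyclic _ _ [[root_in root_out] node_kinds [_ leafP]]] level1_net mrca.
have Hreach v : reach src tgt r v.
  by have [p Hp] := root_walk acyclic node_kinds v; exact: walk_reach Hp.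
have Hdom_r : on_all_root_leaf_paths src tgt r lab r by move=> x p _; exact: mem_head.
have Hin_r : indeg tgt r <= 1 by rewrite root_in.
have [k [rr [hh [R0 Rk Huniq [Hnodes Hedges Hcard]]]]] :=
  dom_chain acyclic root_in root_out node_kinds leafP level1_net mrca Hdom_r (Hreach m) Hin_r.
exists k, rr, hh; split=> //; split=> // [v|e].
- by rewrite -Hnodes; split=> [|[]//]; split.
- by rewrite -Hedges; split=> [|[]//]; split.
Qed.
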